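(* Let $a\in\mathbb{C}\setminus\{0\}$, let $\omega$ be a valid weight, and let $V_a=M_{a-z}^*M_{a-z}$ act on $H^2_\omega$. Then $\sigma_{\mathrm p}(V_a)\subset(0,\infty)$.
   Context: A weight $\omega=\{\omega_n\}_{n\ge0}$ is called valid if it is a monotonic sequence of positive numbers with $\omega_0=1$, $\lim_{n\to\infty}\omega_{n+1}/\omega_n=1$ and $\sum_{n=0}^\infty(1-\omega_{n+1}/\omega_n)^2<\infty$. The weighted Hardy space $H^2_\omega$ is the Hilbert space of holomorphic functions $f(z)=\sum_{n\ge0}a_nz^n$ on the unit disc with $\|f\|_\omega^2=\sum_{n\ge0}|a_n|^2\omega_n<\infty$. $M_{a-z}$ denotes multiplication by $a-z$ on $H^2_\omega$ and $M_{a-z}^*$ its adjoint. $\sigma_{\mathrm p}$ denotes the point spectrum. *)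

From Stdlib Require Import Reals Lra.
From Coquelicot Require Import Coquelicot.
Open Scope R_scope.

Definition valid_weight (w : nat -> R) : Prop :=
  (forall n, 0 < w n) /\
  ((forall n, w (S n) <= w n) \/ (forall n, w n <= w (S n))) /\
  w 0%nat = 1 /\
  is_lim_seq (fun n => w (S n) / w n) 1 /\
  ex_series (fun n => (1 - w (S n) / w n) ^ 2).

(** Elements of H^2_w are represented by their Taylor coefficient
    sequences f(z) = sum_n f_n z^n. *)
Definition inH2 (w : nat -> R) (f : nat -> C) : Prop :=
  ex_series (fun n => (Cmod (f n)) ^ 2 * w n).

Definition inner_w (w : nat -> R) (f g : nat -> C) : C :=
  (Series (fun n => Re (f n * Cconj (g n) * RtoC (w n))%C),
   Series (fun n => Im (f n * Cconj (g n) * RtoC (w n))%C)).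

Definition mult_a_minus_z (a : C) (f : nat -> C) : nat -> C :=
  fun n => match n with
           | O => (a * f O)%C
           | S k => (a * f (S k) - f k)%C
           end.

Definition is_adjoint (w : nat -> R) (M T : (nat -> C) -> (nat -> C)) : Prop :=
  (forall g, inH2 w g -> inH2 w (T g)) /\
  (forall f g, inH2 w f -> inH2 w g ->
     inner_w w (M f) g = inner_w w f (T g)).

Definition in_point_spectrum (w : nat -> R) (V : (nat -> C) -> (nat -> C))
  (lam : C) : Prop :=
  exists f, inH2 w f /\ (exists n, f n <> 0%C) /\
            (forall n, V f n = (lam * f n)%C).

(** For an eigenvector [f] of [V_a = M^* M], [M = M_{a-z}], with eigenvalue
    [lam], the adjoint relation gives
    [||M f||^2 = <M f, M f> = <f, V_a f> = conj lam * ||f||^2].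
    Since [a <> 0], [M] is injective, so both norms are positive and [lam] is a
    positive real.  The only analytic input is that [M] maps [H^2_w] into
    itself, which holds because the ratios [w (n+1) / w n] are bounded. *)

From Stdlib Require Import Reals Lra Classical FunctionalExtensionality.
From Coquelicot Require Import Coquelicot.
Open Scope R_scope.

Lemma Series_gt0 (u : nat -> R) (k : nat) :
  (forall n, 0 <= u n) -> 0 < u k -> ex_series u -> 0 < Series u.
Proof.
  intros u_ge0 uk_gt0 u_sum.
  assert (partial_le : sum_f_R0 u k <= Series u).
  { apply sum_incr; [apply is_series_Reals, Series_correct, u_sum | exact u_ge0]. }
  assert (term_le : u k <= sum_f_R0 u k).
  { destruct k as [|k]; simpl; [lra|].
    pose proof (cond_pos_sum u k u_ge0); lra. }
  lra.
Qed.

Lemma ex_series_le_nonneg (u v : nat -> R) :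
  (forall n, 0 <= u n <= v n) -> ex_series v -> ex_series u.
Proof.
  intros uv. apply (ex_series_le (K := R_AbsRing) (V := R_CompleteNormedModule)).
  intros n. change (Rabs (u n) <= v n). rewrite Rabs_pos_eq; apply uv.
Qed.

Lemma is_lim_seq_bounded_above (u : nat -> R) (l : R) :
  is_lim_seq u l -> exists M, forall n, u n <= M.
Proof.
  intros ul.
  assert (u_bound : bound (EUn u)).
  { apply cauchy_bound, CV_Cauchy. exists l. exact (proj1 (is_lim_seq_Reals u l) ul). }
  destruct u_bound as [M M_ub].
  exists M; intros n; apply M_ub; exists n; reflexivity.
Qed.

Lemma weight_step_bounded (w : nat -> R) (l : R) :
  (forall n, 0 < w n) -> is_lim_seq (fun n => w (S n) / w n) l ->
  exists K, forall n, w (S n) <= K * w n.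
Proof.
  intros w_pos ratio_lim.
  destruct (is_lim_seq_bounded_above _ _ ratio_lim) as [K K_ub].
  exists K; intros n.
  assert (w_eq : w (S n) = w (S n) / w n * w n)
    by (field; apply Rgt_not_eq, w_pos).
  rewrite w_eq; apply Rmult_le_compat_r; [left; apply w_pos | apply K_ub].
Qed.

Lemma Cmod_sub_sq_le (x y : C) : Cmod (x - y) ^ 2 <= 2 * Cmod x ^ 2 + 2 * Cmod y ^ 2.
Proof.
  rewrite !Cmod2_alt; destruct x as [x1 x2], y as [y1 y2]; simpl.
  pose proof (Rle_0_sqr (x1 + y1)); pose proof (Rle_0_sqr (x2 + y2)).
  unfold Rsqr in *; lra.
Qed.

Definition mult_z (f : nat -> C) : nat -> C :=
  fun n => match n with O => 0%C | S k => f k end.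

Lemma mult_a_minus_zE (a : C) (f : nat -> C) (n : nat) :
  mult_a_minus_z a f n = (a * f n - mult_z f n)%C.
Proof. destruct n; simpl; ring. Qed.

Section WeightedHardySpace.

Variable w : nat -> R.
Hypothesis w_pos : forall n, 0 < w n.

Lemma inH2_ext (f g : nat -> C) : (forall n, f n = g n) -> inH2 w f -> inH2 w g.
Proof. intros fg; apply ex_series_ext; intros n; rewrite fg; reflexivity. Qed.

Lemma inH2_scale (c : C) (f : nat -> C) : inH2 w f -> inH2 w (fun n => c * f n)%C.
Proof.
  intros f_in.
  apply (ex_series_ext (V := R_NormedModule) (fun n => Cmod c ^ 2 * (Cmod (f n) ^ 2 * w n))).
  - intros n; simpl; rewrite Cmod_mult; ring.
  - exact (ex_series_scal_l (K := R_AbsRing) _ _ f_in).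
Qed.

Lemma inH2_sub (f g : nat -> C) : inH2 w f -> inH2 w g -> inH2 w (fun n => f n - g n)%C.
Proof.
  intros f_in g_in.
  apply (ex_series_le_nonneg _
           (fun n => 2 * (Cmod (f n) ^ 2 * w n) + 2 * (Cmod (g n) ^ 2 * w n))).
  - intros n; pose proof (w_pos n); pose proof (Cmod_ge_0 (f n - g n)%C).
    pose proof (Cmod_sub_sq_le (f n) (g n)). split; nra.
  - exact (ex_series_plus (K := R_AbsRing) _ _
             (ex_series_scal_l (K := R_AbsRing) 2 _ f_in)
             (ex_series_scal_l (K := R_AbsRing) 2 _ g_in)).
Qed.

Lemma inH2_mult_z (K : R) (f : nat -> C) :
  (forall n, w (S n) <= K * w n) -> inH2 w f -> inH2 w (mult_z f).
Proof.
  intros w_step f_in.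
  apply (ex_series_le_nonneg _ (fun n => K * (Cmod (mult_z f n) ^ 2 * w (pred n)))).
  - intros [|k]; simpl mult_z; simpl pred.
    + rewrite Cmod_0; lra.
    + pose proof (w_pos (S k)); pose proof (w_step k); pose proof (Cmod_ge_0 (f k)).
      split; nra.
  - apply ex_series_incr_1.
    exact (ex_series_scal_l (K := R_AbsRing) K _ f_in).
Qed.

Lemma inH2_mult_a_minus_z (l : R) (a : C) (f : nat -> C) :
  is_lim_seq (fun n => w (S n) / w n) l -> inH2 w f -> inH2 w (mult_a_minus_z a f).
Proof.
  intros ratio_lim f_in.
  destruct (weight_step_bounded w l w_pos ratio_lim) as [K w_step].
  apply (inH2_ext (fun n => a * f n - mult_z f n)%C).
  - intros n; symmetry; apply mult_a_minus_zE.
  - apply inH2_sub; [apply inH2_scale, f_in | exact (inH2_mult_z K f w_step f_in)].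
Qed.

Definition sqnorm_w (f : nat -> C) : R := Series (fun n => Cmod (f n) ^ 2 * w n).

Lemma sqnorm_w_gt0 (f : nat -> C) :
  inH2 w f -> (exists n, f n <> 0%C) -> 0 < sqnorm_w f.
Proof.
  intros f_in [k fk_neq0]. apply (Series_gt0 _ k); [| | exact f_in].
  - intros n; apply Rmult_le_pos; [apply pow2_ge_0 | left; apply w_pos].
  - apply Rmult_lt_0_compat; [apply pow_lt, Cmod_gt_0, fk_neq0 | apply w_pos].
Qed.

Lemma inner_w_diag (f : nat -> C) : inner_w w f f = RtoC (sqnorm_w f).
Proof.
  unfold inner_w, sqnorm_w, RtoC; f_equal.
  - apply Series_ext; intros n; rewrite Cmod2_alt.
    destruct (f n) as [x y]; simpl; ring.
  - transitivity (Series (fun _ : nat => 0 * 0)); [| rewrite Series_scal_l; ring].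
    apply Series_ext; intros n; destruct (f n) as [x y]; simpl; ring.
Qed.

Lemma inner_w_scale_r (lam : C) (f : nat -> C) :
  inner_w w f (fun n => lam * f n)%C = (Cconj lam * RtoC (sqnorm_w f))%C.
Proof.
  unfold inner_w, Cconj, RtoC; destruct lam as [p q].
  apply injective_projections; simpl;
    [transitivity (p * sqnorm_w f) | transitivity (- q * sqnorm_w f)]; try ring;
    unfold sqnorm_w; rewrite <- Series_scal_l; apply Series_ext; intros n;
    rewrite Cmod2_alt; destruct (f n) as [x y]; simpl; ring.
Qed.

End WeightedHardySpace.

Lemma mult_a_minus_z_eq0 (a : C) (f : nat -> C) :
  a <> 0%C -> (forall n, mult_a_minus_z a f n = 0%C) -> forall n, f n = 0%C.
Proof.
  intros a_neq0 Mf_eq0.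
  assert (cancel_a : forall x, (a * x = 0)%C -> x = 0%C).
  { intros x ax_eq0; apply NNPP; intros x_neq0.
    exact (Cmult_neq_0 a x a_neq0 x_neq0 ax_eq0). }
  induction n as [|n IH]; apply cancel_a.
  - exact (Mf_eq0 0%nat).
  - rewrite <- (Mf_eq0 (S n)); simpl; rewrite IH; ring.
Qed.

Lemma mult_a_minus_z_neq0 (a : C) (f : nat -> C) :
  a <> 0%C -> (exists n, f n <> 0%C) -> exists n, mult_a_minus_z a f n <> 0%C.
Proof.
  intros a_neq0 [k fk_neq0]; apply NNPP; intros Mf_eq0.
  apply fk_neq0, (mult_a_minus_z_eq0 a f a_neq0), (not_ex_not_all _ _ Mf_eq0).
Qed.

Theorem corollary4p2 (a : C) (w : nat -> R)
  (Madj : (nat -> C) -> (nat -> C)) :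
  a <> 0%C ->
  valid_weight w ->
  is_adjoint w (mult_a_minus_z a) Madj ->
  forall lam : C,
    in_point_spectrum w (fun f => Madj (mult_a_minus_z a f)) lam ->
    Im lam = 0 /\ 0 < Re lam.
Proof.
  intros a_neq0 [w_pos [_ [_ [ratio_lim _]]]] [_ adjoint] lam [f [f_in [f_neq0 eigen]]].
  pose proof (inH2_mult_a_minus_z w w_pos 1 a f ratio_lim f_in) as Mf_in.
  assert (quad : RtoC (sqnorm_w w (mult_a_minus_z a f))
                 = (Cconj lam * RtoC (sqnorm_w w f))%C).
  { rewrite <- inner_w_diag, adjoint, <- inner_w_scale_r by assumption.
    f_equal; apply functional_extensionality, eigen. }
  pose proof (sqnorm_w_gt0 w w_pos _ Mf_in (mult_a_minus_z_neq0 a f a_neq0 f_neq0))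
    as Mf_gt0.
  pose proof (sqnorm_w_gt0 w w_pos f f_in f_neq0) as f_gt0.
  destruct lam as [p q]; unfold RtoC in quad; simpl in quad |- *.
  injection quad as re_eq im_eq.
  split; nra.
Qed.
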